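(* Let $n\in\mathbb{N}$ and let $\mathcal{K}^n$ be the $n$-dimensional Khalimsky space. Then $\mathcal{K}^n$ is a connected Alexandroff space whose set of closed points is $\{(2\lambda_1,\ldots,2\lambda_n):\lambda_1,\ldots,\lambda_n\in\mathbb{Z}\}$. Consequently a map $f:\mathcal{K}^n\to\mathcal{K}^n$ has closed graph if and only if $f$ is constant with value $(2\lambda_1,\ldots,2\lambda_n)$ for some integers $\lambda_1,\ldots,\lambda_n$; in particular there are countably infinitely many self-maps of $\mathcal{K}^n$ with closed graph. Moreover, the constant map $g:\mathcal{K}^n\to\mathcal{K}^n$ with value $(1,\ldots,1)$ is continuous but does not have closed graph.
   Context: The Khalimsky line $\mathcal{K}$ is $\mathbb{Z}$ with the topology generated by the base consisting of all sets $\{2m+1\}$ and $\{2m-1,2m,2m+1\}$ for $m\in\mathbb{Z}$; $\mathcal{K}^n$ is the $n$-fold product with the product topology. A map $f:X\to Y$ has closed graph if $G_f=\{(x,f(x)):x\in X\}$ is closed in $X\times Y$. A point $y$ is closed if $\{y\}$ is closed. A topological space is an Alexandroff space if the intersection of every nonempty family of open sets is open. *)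

From HB Require Import structures.
From mathcomp Require Import all_boot all_order all_algebra.
From mathcomp Require Import all_classical all_reals all_analysis.
Set Implicit Arguments. Unset Strict Implicit. Unset Printing Implicit Defensive.
Import Order.TTheory GRing.Theory Num.Theory.
Local Open Scope classical_set_scope.
Local Open Scope ring_scope.

(** The Khalimsky line: the integers with the topology generated by the
    sets {2m+1} and {2m-1, 2m, 2m+1}, m in Z. *)
Definition khalimsky : Type := int.
HB.instance Definition _ := Choice.on khalimsky.
HB.instance Definition _ := isPointed.Build khalimsky (0 : int).

Definition khalimsky_base (k : khalimsky) : set khalimsky :=
  if (2 %| (k : int))%Z then [set ((k : int) - 1 : khalimsky); k; ((k : int) + 1 : khalimsky)]
  else [set k].

HB.instance Definition _ :=
  isSubBaseTopological.Build khalimsky (@setT khalimsky) khalimsky_base.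

Definition khalimsky_space (n : nat) : topologicalType :=
  prod_topology (fun _ : 'I_n => khalimsky).

Definition alexandroff (T : topologicalType) : Prop :=
  forall F : set (set T), F !=set0 -> F `<=` open -> open (\bigcap_(A in F) A).

Definition closed_graph (X Y : topologicalType) (f : X -> Y) : Prop :=
  closed [set p : X * Y | p.2 = f p.1].

From HB Require Import structures.
From mathcomp Require Import all_boot all_order all_algebra.
From mathcomp Require Import all_classical all_reals all_analysis.
From mathcomp Require Import zify.
Import Order.TTheory GRing.Theory Num.Theory.
Local Open Scope classical_set_scope.
Local Open Scope ring_scope.

(* Every point x of the Khalimsky space has a smallest open neighbourhood, the
   product of the basic sets around its coordinates.  This makes the space
   Alexandroff and describes the specialization preorder coordinatewise: a
   point is closed iff no other point lies in the closure of its singleton,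
   i.e. iff all its coordinates are even.  Consecutive integers are always
   comparable for specialization, so a set saturated for specialization in both
   directions is empty or everything; this gives connectedness.  A map with
   closed graph takes the same value at comparable points, hence is constant,
   and its value must be a closed point; conversely a constant map with closed
   value has closed graph. *)

(* [specializes x y] is [closure [set x] y]. *)
Definition specializes {T : topologicalType} (x y : T) : Prop :=
  forall A, open A -> A y -> A x.

Section Specialization.
Context {T : topologicalType}.
Implicit Types (x y : T) (A C : set T).

Lemma specializes_refl x : specializes x x.
Proof. by []. Qed.

Lemma closed_specializes {C x y} : closed C -> specializes x y -> C x -> C y.
Proof.
move=> cC xy Cx; apply: contrapT => nCy.
exact: xy _ (closed_openC cC) nCy Cx.
Qed.

Lemma closed_set1P x : closed [set x] <-> forall y, specializes x y -> y = x.
Proof.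
split=> [cx y xy|xmin]; first exact: closed_specializes cx xy erefl.
rewrite -openC.
suff -> : ~` [set x] = \bigcup_(A in [set A | open A /\ ~ A x]) A.
  by apply: bigcup_open => A [].
rewrite predeqE => y; split=> [yx|[A [oA nAx] Ay] yx]; last by rewrite yx in Ay.
apply: contrapT => ncov; apply: yx; apply: xmin => A oA Ay.
by apply: contrapT => nAx; apply: ncov; exists A.
Qed.

Section MinimalNeighbourhoods.
Variable U : T -> set T.
Hypotheses (U_open : forall x, open (U x)) (U_refl : forall x, U x x).
Hypothesis U_min : forall A x, open A -> A x -> U x `<=` A.

Lemma minimal_nbhs_alexandroff : alexandroff T.
Proof.
move=> F _ Fo.
suff -> : \bigcap_(A in F) A = \bigcup_(x in \bigcap_(A in F) A) U x.
  by apply: bigcup_open => x _; exact: U_open.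
rewrite predeqE => y; split=> [Fy|[x Fx Uxy] A FA]; first by exists y.
exact: U_min (Fo _ FA) (Fx _ FA) _ Uxy.
Qed.

Lemma minimal_nbhs_specializesE x y : specializes x y <-> U y x.
Proof.
split=> [xy|Uyx A oA Ay]; first exact: (xy (U y)).
exact: U_min oA Ay _ Uyx.
Qed.

End MinimalNeighbourhoods.

Lemma specializes_saturated_connected :
  (forall B : set T, (forall x y, specializes x y -> B x <-> B y) ->
     forall x y, B x -> B y) ->
  connected [set: T].
Proof.
move=> sat_const B [b Bb] [C oC BC] [D cD BD].
rewrite predeqE => y; split=> // _.
apply: (sat_const B) Bb => x z xz; split.
  by rewrite BD => -[_ Dx]; split=> //; exact: closed_specializes cD xz Dx.
by rewrite BC => -[_ Cz]; split=> //; exact: xz.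
Qed.

End Specialization.

Lemma continuous_specializes {T U : topologicalType} (f : T -> U) {x y : T} :
  continuous f -> specializes x y -> specializes (f x) (f y).
Proof.
move=> cf xy A oA; apply: (xy (f @^-1` A)).
by apply: open_comp => // z _; exact: cf.
Qed.

Lemma specializes_pair {T U : topologicalType} {x y : T} {u v : U} :
  specializes x y -> specializes u v -> specializes (x, u) (y, v).
Proof.
move=> xy uv A; rewrite openE => oA /oA [[P Q] /= [yP vQ] PQA].
move: yP vQ; rewrite !nbhsE => -[P' [oP' yP'] P'P] [Q' [oQ' vQ'] Q'Q].
by apply: PQA; split; [apply/P'P/(xy P') | apply/Q'Q/(uv Q')].
Qed.

Section ClosedGraph.
Context {X Y : topologicalType} {f : X -> Y}.
Hypothesis cG : closed_graph f.

Lemma closed_graph_specializes {x y} : specializes x y -> f x = f y.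
Proof.
move=> xy; have xfx_yfx := specializes_pair xy (specializes_refl (f x)).
exact: (closed_specializes cG xfx_yfx (erefl (f x))).
Qed.

Lemma closed_graph_closed1 x : closed [set f x].
Proof.
apply/closed_set1P => v fxv.
have xfx_xv := specializes_pair (specializes_refl x) fxv.
exact: (closed_specializes cG xfx_xv (erefl (f x))).
Qed.

End ClosedGraph.

Lemma closed_graph_cst {X Y : topologicalType} (c : Y) :
  closed [set c] -> closed_graph (fun _ : X => c).
Proof. by move=> cc; apply: preimage_closed cc => p _; exact: cvg_snd. Qed.

Lemma dfwith_self (I : eqType) (T_ : I -> Type) (f : forall i, T_ i) i :
  dfwith f i (f i) = f.
Proof. by apply: functional_extensionality_dep => j; case: dfwithP. Qed.

Lemma dfwith_ind (n : nat) (T : Type) (P : ('I_n -> T) -> Prop)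
    (x y : 'I_n -> T) :
  P x -> (forall z j, P z -> z j = x j -> P (dfwith z j (y j))) -> P y.
Proof.
move=> Px step.
pose mix m : 'I_n -> T := fun i => if (i < m)%N then y i else x i.
have mixP m : P (mix m).
  elim: m => [|m IHm].
    by rewrite (_ : mix 0%N = x) //; apply: functional_extensionality_dep.
  have [mn|nm] := ltnP m n; last first.
    rewrite (_ : mix m.+1 = mix m) //.
    apply: functional_extensionality_dep => i.
    have im := leq_trans (ltn_ord i) nm.
    by rewrite /mix ltnS (ltnW im) im.
  rewrite (_ : mix m.+1 = dfwith (mix m) (Ordinal mn) (y (Ordinal mn))).
    by apply: step => //; rewrite /mix ltnn.
  apply: functional_extensionality_dep => i; rewrite /mix ltnS leq_eqVlt.
  case: dfwithP => [|{}i ne]; first by rewrite eqxx.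
  suff /negbTE -> : nat_of_ord i != m by [].
  by apply: contra ne => /eqP im; apply/eqP/val_inj.
rewrite (_ : y = mix n) //; apply: functional_extensionality_dep => i.
by rewrite /mix ltn_ord.
Qed.

Section KhalimskyLine.
Implicit Types (j k : khalimsky).

Lemma khalimsky_base_refl k : khalimsky_base k k.
Proof. by rewrite /khalimsky_base; case: ifP => _ /=; [left; right|]. Qed.

Lemma khalimsky_base_trans j k :
  khalimsky_base j k -> khalimsky_base k `<=` khalimsky_base j.
Proof.
rewrite /khalimsky_base; case: ifP => Hj /=; last by move=> ->; rewrite Hj.
move=> [[|]|] ->; case: ifP => Hk /=.
all: try (exfalso; move: Hj Hk; lia).
all: try by move=> _ ->; left; left.
all: try by move=> _ ->; right.
all: by [].
Qed.

Lemma khalimsky_base_open k : open (khalimsky_base k).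
Proof.
exists [set khalimsky_base k]; last by rewrite bigcup_set1.
by move=> _ ->; exact: finI_from1.
Qed.

Lemma khalimsky_base_min (A : set khalimsky) k :
  open A -> A k -> khalimsky_base k `<=` A.
Proof.
move=> [D sD <-] [B DB Bk] j kj; exists B => //.
have [F sF BE] := sD _ DB; rewrite -BE in Bk *.
by move=> i Fi; exact: khalimsky_base_trans (Bk i Fi) _ kj.
Qed.

Lemma khalimsky_specializesE j k : specializes j k <-> khalimsky_base k j.
Proof.
exact: (minimal_nbhs_specializesE _ khalimsky_base_open khalimsky_base_refl
  khalimsky_base_min).
Qed.

Lemma khalimsky_specializes_succ k :
  specializes k (k + 1 : khalimsky) \/ specializes (k + 1 : khalimsky) k.
Proof.
rewrite !khalimsky_specializesE /khalimsky_base.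
have [k2|k2] := boolP (2 %| k)%Z; first by right; right.
by left; rewrite (_ : (2 %| k + 1)%Z) /=; [left; left; rewrite addrK | lia].
Qed.

Lemma khalimsky_saturated_const (B : set khalimsky) :
  (forall j k, specializes j k -> B j <-> B k) -> forall j k, B j -> B k.
Proof.
move=> sat j k Bj.
have succ i : B i <-> B (i + 1 : khalimsky).
  by case: (khalimsky_specializes_succ i) => /sat // [? ?].
have up (m : nat) : B (j + m%:Z : khalimsky).
  elim: m => [|m IHm]; first by rewrite addr0.
  by rewrite (_ : j + m.+1%:Z = j + m%:Z + 1); [exact: (succ _).1 | lia].
have down (m : nat) : B (j - m%:Z : khalimsky).
  elim: m => [|m IHm]; first by rewrite subr0.
  by apply: (succ _).2; rewrite (_ : j - m.+1%:Z + 1 = j - m%:Z); [| lia].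
have [m [->|->]] : exists m : nat, k = j + m%:Z \/ k = j - m%:Z.
  by exists `|k - j|%N; lia.
all: by [].
Qed.

Lemma khalimsky_base_fixedP k :
  (forall j, khalimsky_base j k -> j = k) <-> (2 %| k)%Z.
Proof.
rewrite /khalimsky_base; split=> [fixk|k2 j].
  apply: contrapT => /negP k2.
  have /fixk : khalimsky_base (k - 1 : khalimsky) k.
    by rewrite /khalimsky_base (_ : (2 %| k - 1)%Z) /=; [right; lia | lia].
  lia.
case: ifP => j2 /=; last by move->.
by move=> [[|]|] kj; move: j2 k2; rewrite kj; lia.
Qed.

End KhalimskyLine.

Section KhalimskySpace.
Variable n : nat.
Local Notation KS := (khalimsky_space n).
Implicit Types (x y : KS) (f : KS -> KS).

Definition khalimsky_nbhd x : set KS :=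
  [set y | forall i, khalimsky_base (x i) (y i)].

Lemma khalimsky_nbhd_refl x : khalimsky_nbhd x x.
Proof. by move=> i; exact: khalimsky_base_refl. Qed.

Lemma khalimsky_nbhd_open x : open (khalimsky_nbhd x).
Proof.
rewrite openE => y xy.
apply: (@filter_forall KS 'I_n (fun i z => khalimsky_base (x i) (z i)) (nbhs y))
  => i.
have oi : open (proj i @^-1` khalimsky_base (x i) : set KS).
  apply: open_comp => [z _|]; first exact: proj_continuous.
  exact: khalimsky_base_open.
exact: open_nbhs_nbhs (conj oi (xy i)).
Qed.

(* Move from x to y one coordinate at a time: the trace of A on the coordinate
   line through the current point is open in the Khalimsky line, hence contains
   the basic set around the current coordinate. *)
Lemma khalimsky_nbhd_min (A : set KS) x :
  open A -> A x -> khalimsky_nbhd x `<=` A.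
Proof.
move=> oA Ax y xy; apply: (@dfwith_ind n khalimsky A x y Ax) => z j Az zjx.
have oAj : open (dfwith z j @^-1` A : set khalimsky).
  apply: (@open_comp khalimsky KS (dfwith z j)) => // t _.
  exact: dfwith_continuous.
have zjA : (dfwith z j @^-1` A) (z j) by rewrite /= dfwith_self.
have zyj : khalimsky_base (z j) (y j) by rewrite zjx; exact: xy.
exact: khalimsky_base_min oAj zjA _ zyj.
Qed.

Lemma khalimsky_space_alexandroff : alexandroff KS.
Proof.
exact: minimal_nbhs_alexandroff khalimsky_nbhd_open khalimsky_nbhd_refl
  khalimsky_nbhd_min.
Qed.

Lemma khalimsky_space_specializesE x y : specializes x y <-> khalimsky_nbhd y x.
Proof.
exact: (minimal_nbhs_specializesE _ khalimsky_nbhd_open khalimsky_nbhd_refl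
  khalimsky_nbhd_min).
Qed.

Lemma khalimsky_space_closed1P x : closed [set x] <-> forall i, (2 %| x i)%Z.
Proof.
rewrite closed_set1P; setoid_rewrite khalimsky_space_specializesE.
split=> [fixx i|x2 y yx].
  apply/khalimsky_base_fixedP => j jx.
  have := fixx (dfwith x i j) => /(_ _)/(congr1 (fun z : KS => z i)).
  rewrite dfwithin; apply=> k; case: dfwithP => // {}k _.
  exact: khalimsky_base_refl.
apply: functional_extensionality_dep => i.
exact: (khalimsky_base_fixedP (x i)).2 (x2 i) _ (yx i).
Qed.

Lemma khalimsky_space_saturated_const (B : set KS) :
  (forall x y, specializes x y -> B x <-> B y) -> forall x y, B x -> B y.
Proof.
move=> sat x y Bx; apply: (@dfwith_ind n khalimsky B x y Bx) => z j Bz _.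
have : (dfwith z j @^-1` B) (z j) by rewrite /= dfwith_self.
apply: khalimsky_saturated_const => a b ab; apply: sat.
have zjc : continuous (dfwith z j : khalimsky -> KS).
  exact: dfwith_continuous.
exact: continuous_specializes zjc ab.
Qed.

Lemma khalimsky_space_connected : connected [set: KS].
Proof.
apply: specializes_saturated_connected; exact: khalimsky_space_saturated_const.
Qed.

Lemma khalimsky_space_closed_graphP f :
  closed_graph f <->
  exists l : 'I_n -> int, f = (fun _ i => (2 * l i : khalimsky)).
Proof.
split=> [cG|[l ->]]; last first.
  by apply/closed_graph_cst/khalimsky_space_closed1P => i; lia.
pose x0 : KS := fun _ => 0.
have fE x : f x = f x0.
  apply: (khalimsky_space_saturated_const [set x | f x = f x0] _ x0) => //=.
  move=> a b ab.
  by rewrite (closed_graph_specializes cG ab).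
have /khalimsky_space_closed1P fx02 := closed_graph_closed1 cG x0.
exists (fun i => (f x0 i %/ 2)%Z).
apply: functional_extensionality_dep => x; rewrite fE.
by apply: functional_extensionality_dep => i; move: (fx02 i); lia.
Qed.

Lemma khalimsky_space_closed_graph_card : (0 < n)%N ->
  ([set f : KS -> KS | closed_graph f] #= [set: nat])%card.
Proof.
move=> n_gt0; pose x0 : KS := fun _ => 0.
apply/card_eqPle; split.
  apply/countable_injP.
  exists (fun f : KS -> KS => pickle ([ffun i => f x0 i] : {ffun 'I_n -> int})).
  move=> f g; rewrite !inE => /khalimsky_space_closed_graphP [lf ->].
  move=> /khalimsky_space_closed_graphP [lg ->] /(pcan_inj pickleK) /ffunP fg.
  apply: functional_extensionality_dep => x.
  by apply: functional_extensionality_dep => i; have := fg i; rewrite !ffunE.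
pose cst (k : nat) : KS -> KS := fun _ _ => 2 * k%:Z.
have cst_inj : {in [set: nat] &, injective cst}.
  move=> k1 k2 _ _ /(congr1 (fun g => g x0 (Ordinal n_gt0))).
  by rewrite /cst; lia.
apply: (@card_le_trans _ _ _ (cst @` [set: nat])).
  by have /card_eqPle [] := inj_card_eq cst_inj.
apply: subset_card_le => _ [k _ <-].
by apply/khalimsky_space_closed_graphP; exists (fun _ => k%:Z).
Qed.

End KhalimskySpace.

Theorem mainTheorem9 (n : nat) (n_gt0 : (0 < n)%N) :
  connected [set: khalimsky_space n] /\
      alexandroff (khalimsky_space n) /\
      [set x : khalimsky_space n | closed [set x]] =
        [set x : khalimsky_space n | forall i : 'I_n, exists l : int, x i = 2 * l] /\
      (forall f : khalimsky_space n -> khalimsky_space n,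
          closed_graph f <->
          exists l : 'I_n -> int,
            f = (fun _ => (fun i : 'I_n => (2 * l i : khalimsky)) : khalimsky_space n)) /\
      ([set f : khalimsky_space n -> khalimsky_space n | closed_graph f]
         #= [set: nat])%card /\
      continuous (fun _ : khalimsky_space n =>
                    (fun _ : 'I_n => (1 : khalimsky)) : khalimsky_space n) /\
      ~ closed_graph (fun _ : khalimsky_space n =>
                    (fun _ : 'I_n => (1 : khalimsky)) : khalimsky_space n).
Proof.
split; first exact: khalimsky_space_connected.
split; first exact: khalimsky_space_alexandroff.
split.
  rewrite predeqE => x /=; rewrite khalimsky_space_closed1P.
  split=> x2 i; last by have [l ->] := x2 i; lia.
  by exists (x i %/ 2)%Z; move: (x2 i); lia.
split; first exact: khalimsky_space_closed_graphP.
split; first exact: khalimsky_space_closed_graph_card.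
split; first exact: cst_continuous.
move=> /khalimsky_space_closed_graphP [l].
by move=> /(congr1 (fun g => g (fun _ => 0) (Ordinal n_gt0))) /=; lia.
Qed.
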